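(* Let $\Phi$ be an irreducible reduced root system with basis $\Delta$. Let $\alpha,\beta$ be long roots with $\alpha\le\beta$. Write $\beta=\sum_{\sigma\in J}n_\sigma\sigma$ and $\alpha=\sum_{\tau\in K}m_\tau\tau$ where $J,K$ are non-empty subsets of $\Delta$ and the $n_\sigma$ (resp. $m_\tau$) are non-zero integers all of the same sign. Then: (i) if $0<\alpha\le\beta$, there is a simple path from $\beta$ to $\alpha$; (ii) if $\alpha<0<\beta$, there is a simple path from $\beta$ to $\alpha$ if and only if some long simple root belongs to both $J$ and $K$; and there is a path from $\beta$ to $\alpha$ if and only if there exist a long root $\sigma\in J$ and a long root $\tau\in K$ with $(\sigma|\tau)\neq0$; (iii) if $\alpha\le\beta<0$, there is a simple path from $\beta$ to $\alpha$.
   Context: $(\cdot|\cdot)$ is a $W$-invariant scalar product with minimal squared root length $1$, maximal squared root length $r$; long roots have squared length $r$; $\Delta_{\mathrm{lg}},\Delta_{\mathrm{sh}}$ are the long and short simple roots. For $x,y$ in the ambient space, $y\le x$ means $x-y$ is a non-negative combination of simple roots. For a long root $\gamma=\sum_{\delta\in\Delta}n_\delta\delta$, $\mathrm{ht}^\vee(\gamma)=\sum_{\delta\in\Delta_{\mathrm{lg}}}n_\delta+\frac1r\sum_{\delta\in\Delta_{\mathrm{sh}}}n_\delta$; $\tilde\alpha$ is the highest root. Level of a long root: $L(\gamma)=\mathrm{ht}^\vee(\tilde\alpha)-\mathrm{ht}^\vee(\gamma)$ if $\gamma>0$, and $L(\gamma)=\mathrm{ht}^\vee(\tilde\alpha)-\mathrm{ht}^\vee(\gamma)-1$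 if $\gamma<0$. For long roots $\beta',\alpha'$ and a positive root $\gamma$, $\beta'\xrightarrow{\gamma}\alpha'$ means $\alpha'=s_\gamma(\beta')$ and $L(\alpha')=L(\beta')+1$. A path from $\beta$ to $\alpha$ is a sequence of long roots $\beta=\beta_0\xrightarrow{\gamma_1}\beta_1\cdots\xrightarrow{\gamma_k}\beta_k=\alpha$ with positive roots $\gamma_i$; it is a simple path if all $\gamma_i$ are simple roots. *)

From HB Require Import structures.
From mathcomp Require Import all_boot all_order all_algebra.
From mathcomp Require Import boolp reals.
Set Implicit Arguments. Unset Strict Implicit. Unset Printing Implicit Defensive.
Import Order.TTheory GRing.Theory Num.Theory.
Local Open Scope ring_scope.

Section RootSystems.
Variables (R : realType) (n : nat).
Local Notation V := 'rV[R]_n.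

Definition dotv (x y : V) : R := (x *m y^T) 0 0.

Definition refl (a x : V) : V := x - (2 * dotv x a / dotv a a) *: a.

Definition is_reduced_root_system (Phi : seq V) : Prop :=
  [/\ uniq Phi /\ (0 : V) \notin Phi, (span Phi = fullv)%VS,
      (forall a b, a \in Phi -> b \in Phi -> refl a b \in Phi),
      (forall a b, a \in Phi -> b \in Phi ->
          exists z : int, 2 * dotv b a / dotv a a = z%:~R) &
      (forall a (c : R), a \in Phi -> c *: a \in Phi -> c = 1 \/ c = -1)].

Definition is_irreducible (Phi : seq V) : Prop :=
  Phi != [::] /\
  forall P : pred V,
    (forall a b, a \in Phi -> b \in Phi -> P a -> ~~ P b -> dotv a b = 0) ->
    all P Phi \/ all (predC P) Phi.

Definition is_basis (Phi : seq V) (l : nat) (Delta : l.-tuple V) : Prop :=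
  [/\ {subset Delta <= Phi}, free Delta &
      forall g, g \in Phi -> exists c : 'I_l -> int,
        g = \sum_(i < l) (c i)%:~R *: tnth Delta i /\
        ((forall i, 0 <= c i) \/ (forall i, c i <= 0))].

Definition coef l (Delta : l.-tuple V) (i : 'I_l) (x : V) : R := coord Delta i x.

Definition rle l (Delta : l.-tuple V) (y x : V) : Prop :=
  exists c : 'I_l -> R, (forall i, 0 <= c i) /\ x - y = \sum_(i < l) c i *: tnth Delta i.
Definition rlt l (Delta : l.-tuple V) (y x : V) : Prop := rle Delta y x /\ y <> x.

Definition long (Phi : seq V) (x : V) : bool :=
  (x \in Phi) && all (fun b => dotv b b <= dotv x x) Phi.

Definition maxsq (Phi : seq V) : R := foldr (fun a m => Num.max (dotv a a) m) 0 Phi.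
Definition minsq (Phi : seq V) : R :=
  foldr (fun a m => Num.min (dotv a a) m) (maxsq Phi) Phi.
Definition ratio (Phi : seq V) : R := maxsq Phi / minsq Phi.

Definition htv (Phi : seq V) l (Delta : l.-tuple V) (g : V) : R :=
  \sum_(i < l | long Phi (tnth Delta i)) coef Delta i g
  + (ratio Phi)^-1 * \sum_(i < l | ~~ long Phi (tnth Delta i)) coef Delta i g.

(* level of a long root, relative to the highest root ta *)
Definition level (Phi : seq V) l (Delta : l.-tuple V) (ta g : V) : R :=
  if `[< rlt Delta 0 g >] then htv Phi Delta ta - htv Phi Delta g
  else htv Phi Delta ta - htv Phi Delta g - 1.

Definition arrow (Phi : seq V) l (Delta : l.-tuple V) (ta b' g a' : V) : Prop :=
  [/\ long Phi b' && long Phi a', g \in Phi, rlt Delta 0 g, a' = refl g b' &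
      level Phi Delta ta a' = level Phi Delta ta b' + 1].

Fixpoint is_path (Phi : seq V) l (Delta : l.-tuple V) (ta : V)
    (b : V) (steps : seq (V * V)) (a : V) : Prop :=
  match steps with
  | [::] => b = a
  | (g, b1) :: s => arrow Phi Delta ta b g b1 /\ is_path Phi Delta ta b1 s a
  end.

Definition has_path (Phi : seq V) l (Delta : l.-tuple V) (ta b a : V) : Prop :=
  long Phi b /\ exists steps, is_path Phi Delta ta b steps a.

Definition has_simple_path (Phi : seq V) l (Delta : l.-tuple V) (ta b a : V) : Prop :=
  long Phi b /\ exists steps, is_path Phi Delta ta b steps a /\
    all (fun p => p.1 \in (Delta : seq V)) steps.

End RootSystems.

(* Along an arrow [b' --g--> s_g b'] the dual height drops by <b', g^v> ht^v(g); as levels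
   differ by 1, the drop is 1 when both roots lie on the same side of 0 and 2 when
   [b' > 0 > s_g b'].  For long roots [a < b] on one side of 0, some simple root d has a
   positive coefficient in [b - a] and (d|b) > 0; then <d, b^v> = 1, so
   [s_d b = b - (|b|^2/|d|^2) d] has dual height one less, and integrality of the coordinates
   of coroots keeps [a <= s_d b]: iterating gives a simple path.  A path from [b > 0] to
   [a < 0] crosses 0 through one arrow [x -> y] with ht^v(x) - ht^v(y) = 2; as positive long
   roots have ht^v >= 1, with equality exactly at long simple roots, [x = d] and [y = -d'] for
   long simple roots in the supports of [b] and [a].  If the reflection is simple then d = d',
   and in general (d|d') <> 0.  Conversely [s_d d = -d], and for distinct long d, d' with
   (d|d') <> 0 the root [d + d'] reflects [d] to [-d']. *)

From Pilot Require Import Defs.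
From mathcomp Require Import all_boot all_order all_algebra.
From mathcomp Require Import reals boolp.
From mathcomp Require Import zify ring lra.
Import Order.TTheory GRing.Theory Num.Theory.
Local Open Scope ring_scope.
Set Implicit Arguments. Unset Strict Implicit. Unset Printing Implicit Defensive.

Lemma gt0_intr_ge1 (R : archiRealDomainType) (x : R) :
  x \is a Num.int -> 0 < x -> 1 <= x.
Proof. by move=> xZ x_gt0; rewrite -(gtr0_norm x_gt0) norm_intr_ge1 ?gt_eqF. Qed.

Lemma intr_mul_eq1 (R : archiRealDomainType) (u v : R) :
  u \is a Num.int -> v \is a Num.int -> u * v = 1 -> u ^+ 2 = 1.
Proof.
move=> uZ vZ uv1; have : u * v != 0 by rewrite uv1 oner_neq0.
rewrite mulf_eq0 negb_or => /andP[u0 v0].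
have u1 := norm_intr_ge1 uZ u0; have v1 := norm_intr_ge1 vZ v0.
have uv : `|u| * `|v| = 1 by rewrite -normrM uv1 normr1.
rewrite -(intr_normK uZ) (_ : `|u| = 1) ?expr1n //; nra.
Qed.

Section ScalarProduct.
Variables (R : realType) (n : nat).
Implicit Types (x y z : 'rV[R]_n) (k : R).

Lemma dotvE x y : dotv x y = \sum_j x 0 j * y 0 j.
Proof. by rewrite /dotv !mxE; apply: eq_bigr => j _; rewrite !mxE. Qed.

Lemma dotvC x y : dotv x y = dotv y x.
Proof. by rewrite !dotvE; apply: eq_bigr => j _; rewrite mulrC. Qed.

Lemma dotvDl x y z : dotv (x + y) z = dotv x z + dotv y z.
Proof. by rewrite !dotvE -big_split; apply: eq_bigr => j _; rewrite !mxE mulrDl. Qed.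

Lemma dotvZl k x z : dotv (k *: x) z = k * dotv x z.
Proof. by rewrite !dotvE mulr_sumr; apply: eq_bigr => j _; rewrite !mxE mulrA. Qed.

Lemma dotvNl x z : dotv (- x) z = - dotv x z.
Proof. by rewrite -scaleN1r dotvZl mulN1r. Qed.

Lemma dotvBl x y z : dotv (x - y) z = dotv x z - dotv y z.
Proof. by rewrite dotvDl dotvNl. Qed.

Lemma dotvDr x y z : dotv z (x + y) = dotv z x + dotv z y.
Proof. by rewrite dotvC dotvDl !(dotvC z). Qed.

Lemma dotvZr k x z : dotv z (k *: x) = k * dotv z x.
Proof. by rewrite dotvC dotvZl dotvC. Qed.

Lemma dotvNr x z : dotv z (- x) = - dotv z x.
Proof. by rewrite dotvC dotvNl dotvC. Qed.

Lemma dotvBr x y z : dotv z (x - y) = dotv z x - dotv z y.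
Proof. by rewrite dotvC dotvBl !(dotvC z). Qed.

Lemma dotv_suml (I : Type) (r : seq I) (P : pred I) (F : I -> 'rV[R]_n) z :
  dotv (\sum_(i <- r | P i) F i) z = \sum_(i <- r | P i) dotv (F i) z.
Proof.
apply: (big_morph (fun x => dotv x z)) => [x y|]; first exact: dotvDl.
by rewrite -(scale0r 0) dotvZl mul0r.
Qed.

Lemma dotv_ge0 x : 0 <= dotv x x.
Proof. by rewrite dotvE sumr_ge0 // => j _; rewrite -expr2 sqr_ge0. Qed.

Lemma dotv_gt0 x : x != 0 -> 0 < dotv x x.
Proof.
apply: contraNT; rewrite -leNgt => xx_le0; apply/eqP/rowP => j.
have /eqP : dotv x x = 0 by apply/eqP; rewrite eq_le xx_le0 dotv_ge0.
rewrite dotvE psumr_eq0 => [/allP/(_ j (mem_index_enum _))|i _].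
  by rewrite mulf_eq0 orbb mxE => /eqP.
by rewrite -expr2 sqr_ge0.
Qed.

Lemma cauchy_schwarz_lt x y : y != 0 -> (forall k, x <> k *: y) ->
  dotv x y ^+ 2 < dotv x x * dotv y y.
Proof.
move=> y0 x_npar; have yy_gt0 := dotv_gt0 y0.
have := dotv_gt0 (x := x - (dotv x y / dotv y y) *: y).
rewrite subr_eq0 => /(_ (introN eqP (x_npar _))).
rewrite !(dotvBl, dotvBr, dotvZl, dotvZr) (dotvC y x).
set a := dotv x x; set b := dotv x y; set c := dotv y y.
have -> : a - b / c * b - b / c * (b - b / c * c) = (a * c - b ^+ 2) / c.
  by field; exact: lt0r_neq0.
by rewrite pmulr_lgt0 ?invr_gt0 // subr_gt0.
Qed.

End ScalarProduct.

Section Reflections.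
Variables (R : realType) (n : nat).
Implicit Types (a b x y : 'rV[R]_n).

Definition cartan x a : R := 2 * dotv x a / dotv a a.

Lemma reflE a x : refl a x = x - cartan x a *: a. Proof. by []. Qed.

Lemma dotv_refl a x y : dotv (refl a x) y = dotv x y - cartan x a * dotv a y.
Proof. by rewrite reflE dotvBl dotvZl. Qed.

Lemma dotv_refl2 a x : a != 0 -> dotv (refl a x) (refl a x) = dotv x x.
Proof.
move=> a0; rewrite !reflE /cartan !(dotvBl, dotvBr, dotvZl, dotvZr) (dotvC a x).
by field; exact/lt0r_neq0/dotv_gt0.
Qed.

Lemma refl_self a : a != 0 -> refl a a = - a.
Proof.
move=> a0; rewrite reflE /cartan mulfK ?lt0r_neq0 ?dotv_gt0 //.
by rewrite scaler_nat mulr2n opprD addrA subrr add0r.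
Qed.

Lemma reflK a : a != 0 -> involutive (refl a).
Proof.
move=> a0 x; have aa0 : dotv a a != 0 by exact/lt0r_neq0/dotv_gt0.
have e : cartan (refl a x) a = - cartan x a.
  by rewrite /cartan dotv_refl /cartan; field.
by rewrite [refl a (refl a x)]reflE e scaleNr opprK reflE subrK.
Qed.

Lemma cartan_rel a b : a != 0 -> b != 0 ->
  dotv b b * cartan a b = dotv a a * cartan b a.
Proof.
move=> a0 b0; rewrite /cartan (dotvC b a).
by field; rewrite !lt0r_neq0 ?dotv_gt0.
Qed.

Lemma cartan_eq0 a b : b != 0 -> (cartan a b == 0) = (dotv a b == 0).
Proof.
move=> b0; rewrite /cartan !mulf_eq0 invr_eq0 pnatr_eq0 /=.
by rewrite (negbTE (lt0r_neq0 (dotv_gt0 b0))) orbF.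
Qed.

Lemma cartan_mul_lt4 a b : a != 0 -> b != 0 -> (forall k, a <> k *: b) ->
  cartan a b * cartan b a < 4.
Proof.
move=> a0 b0 a_npar; have aa := dotv_gt0 a0; have bb := dotv_gt0 b0.
have -> : cartan a b * cartan b a = 4 * (dotv a b ^+ 2 / (dotv a a * dotv b b)).
  by rewrite /cartan (dotvC b a); field; rewrite !lt0r_neq0.
rewrite -[X in _ < X]mulr1 ltr_pM2l // ltr_pdivrMr ?mul1r ?mulr_gt0 //.
exact: cauchy_schwarz_lt.
Qed.

Lemma cartan_sqr_le_mul a b : a != 0 -> dotv a a <= dotv b b ->
  cartan a b ^+ 2 <= cartan a b * cartan b a.
Proof.
move=> a0 ab; have aa := dotv_gt0 a0; have bb := lt_le_trans aa ab.
have -> : cartan a b * cartan b a = cartan a b ^+ 2 * (dotv b b / dotv a a).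
  by rewrite /cartan (dotvC b a); field; rewrite !lt0r_neq0.
by rewrite ler_peMr ?sqr_ge0 // ler_pdivlMr // mul1r.
Qed.

End Reflections.

Lemma foldr_select (T : eqType) (U : Type) (op : U -> U -> U) (f : T -> U) t s :
  (forall x y, op x y = x \/ op x y = y) ->
  foldr (fun a m => op (f a) m) t s = t \/
  exists2 a, a \in s & foldr (fun a m => op (f a) m) t s = f a.
Proof.
move=> opP; elim: s => [|b s IHs] /=; first by left.
case: (opP (f b) (foldr (fun a m => op (f a) m) t s)) => ->.
  by right; exists b; rewrite ?mem_head.
by case: IHs => [->|[a sa ->]]; [left | right; exists a; rewrite // in_cons sa orbT].
Qed.

Section RootSystem.
Variables (R : realType) (n l : nat) (Phi : seq 'rV[R]_n) (Delta : l.-tuple 'rV[R]_n).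
Hypotheses (PhiR : is_reduced_root_system Phi) (PhiI : is_irreducible Phi)
  (DeltaB : is_basis Phi Delta).
Variable ta : 'rV[R]_n.
Implicit Types (a b g x y : 'rV[R]_n).
Local Notation delta i := (tnth Delta i).
Local Notation coef := (coef Delta).

Lemma root_neq0 a : a \in Phi -> a != 0.
Proof. by case: PhiR => -[_ Phi0] _ _ _ _ aPhi; apply: contraNneq Phi0 => <-. Qed.

Lemma refl_root a x : a \in Phi -> x \in Phi -> refl a x \in Phi.
Proof. by case: PhiR => _ _ + _ _; apply. Qed.

Lemma cartan_int x a : a \in Phi -> x \in Phi -> cartan x a \is a Num.int.
Proof.
by move=> aPhi xPhi; case: PhiR => _ _ _ /(_ a x aPhi xPhi) [z ez] _; rewrite /cartan ez intr_int.
Qed.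

Lemma root_proportional a b k : a \in Phi -> b \in Phi -> a = k *: b -> k = 1 \/ k = -1.
Proof. by case: PhiR => _ _ _ _ + aPhi bPhi e => /(_ b k bPhi); apply; rewrite -e. Qed.

Lemma oppr_root a : a \in Phi -> - a \in Phi.
Proof. by move=> aPhi; rewrite -refl_self ?root_neq0 ?refl_root. Qed.

Lemma dotv_root_proportional a b k : a \in Phi -> b \in Phi -> a = k *: b ->
  dotv a a = dotv b b.
Proof.
move=> aPhi bPhi e; have [] := root_proportional aPhi bPhi e => ek;
  by rewrite e ek dotvZl dotvZr mulrA ?mulN1r ?opprK !mul1r.
Qed.

Lemma cartan_shorter a b : a \in Phi -> b \in Phi -> dotv a a <= dotv b b ->
  (forall k, a <> k *: b) -> dotv a b != 0 -> cartan a b = 1 \/ cartan a b = -1.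
Proof.
move=> aPhi bPhi ab a_npar ab0; have a0 := root_neq0 aPhi; have b0 := root_neq0 bPhi.
have lt4 := le_lt_trans (cartan_sqr_le_mul a0 ab) (cartan_mul_lt4 a0 b0 a_npar).
have /intrP[z ez] := cartan_int bPhi aPhi.
have : cartan a b != 0 by rewrite cartan_eq0.
move: lt4; rewrite ez intr_eq0 expr2 -intrM -[4]/(4%:~R) ltr_int => z2 z0.
have : z = 1 \/ z = -1 by nia.
by case=> ->; [left | right].
Qed.

Lemma dotv_root_ratio a b : a \in Phi -> b \in Phi -> dotv a b != 0 ->
  dotv a a <= dotv b b ->
  [\/ dotv b b = dotv a a, dotv b b = 2 * dotv a a | dotv b b = 3 * dotv a a].
Proof.
move=> aPhi bPhi ab0 ab; have a0 := root_neq0 aPhi; have b0 := root_neq0 bPhi.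
have aa := dotv_gt0 a0.
have [[k e]|a_npar] := EM (exists k, a = k *: b).
  by apply: Or31; rewrite (dotv_root_proportional aPhi bPhi e).
have a_npar' k : a <> k *: b by move=> e; apply: a_npar; exists k.
have e2 : cartan a b ^+ 2 = 1.
  by case: (cartan_shorter aPhi bPhi ab a_npar' ab0) => ->; rewrite ?sqrrN expr1n.
set w := cartan a b * cartan b a.
have wZ : w \is a Num.int by rewrite rpredM ?cartan_int.
have ew : dotv b b = dotv a a * w.
  by rewrite /w mulrA mulrAC -cartan_rel // -mulrA -expr2 e2 mulr1.
have w1 : 1 <= w by rewrite -(ler_pM2l aa) -ew mulr1.
have w4 : w < 4 by exact: cartan_mul_lt4.
have /intrP[z ez] := wZ; rewrite ez in ew w1 w4.
move: w1 w4; rewrite -[1]/(1%:~R) -[4]/(4%:~R) ler_int ltr_int => z1 z4.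
have : z = 1 \/ z = 2 \/ z = 3 by lia.
case=> [|[|]] zE; rewrite zE in ew; [apply: Or31 | apply: Or32 | apply: Or33];
  by rewrite ew ?mulr1 // mulrC.
Qed.

Lemma maxsq_ge a : a \in Phi -> dotv a a <= maxsq Phi.
Proof.
rewrite /maxsq; elim: Phi a => [//|b s IHs] a; rewrite in_cons /= le_max.
by case/orP => [/eqP ->|/IHs ->]; rewrite ?lexx ?orbT.
Qed.

Lemma minsq_le a : a \in Phi -> minsq Phi <= dotv a a.
Proof.
rewrite /minsq; move: (maxsq Phi) => t; elim: Phi a => [//|b s IHs] a.
rewrite in_cons /= ge_min.
by case/orP => [/eqP ->|/IHs ->]; rewrite ?lexx ?orbT.
Qed.

Lemma maxsq_root : exists2 a, a \in Phi & dotv a a = maxsq Phi.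
Proof.
have maxP (u v : R) : Num.max u v = u \/ Num.max u v = v.
  by case: (leP u v) => _; [right|left].
rewrite /maxsq; case: (foldr_select (fun a => dotv a a) 0 Phi maxP) => [M0|[a aPhi ->]];
  last by exists a.
have [b bPhi] : exists b, b \in Phi.
  by case: PhiI; rewrite -size_eq0 -lt0n -has_predT => /hasP[b]; exists b.
have := maxsq_ge bPhi; rewrite /maxsq M0 leNgt.
by rewrite (dotv_gt0 (root_neq0 bPhi)).
Qed.

Lemma maxsq_gt0 : 0 < maxsq Phi.
Proof. by have [a aPhi <-] := maxsq_root; exact/dotv_gt0/root_neq0. Qed.

Lemma minsq_root : exists2 a, a \in Phi & dotv a a = minsq Phi.
Proof.
have minP (u v : R) : Num.min u v = u \/ Num.min u v = v.
  by case: (leP u v) => _; [left|right].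
rewrite /minsq.
case: (foldr_select (fun a => dotv a a) (maxsq Phi) Phi minP) => [->|[a aPhi ->]].
  exact: maxsq_root.
by exists a.
Qed.

Lemma minsq_gt0 : 0 < minsq Phi.
Proof. by have [a aPhi <-] := minsq_root; exact/dotv_gt0/root_neq0. Qed.

Lemma longE x : long Phi x = (x \in Phi) && (dotv x x == maxsq Phi).
Proof.
rewrite /long; case xPhi: (x \in Phi) => //=; apply/allP/eqP => [x_max|->].
  apply/eqP; rewrite eq_le maxsq_ge //=.
  by have [a aPhi <-] := maxsq_root; exact: x_max.
by move=> b bPhi; rewrite maxsq_ge.
Qed.

Lemma longP x : long Phi x -> x \in Phi /\ dotv x x = maxsq Phi.
Proof. by rewrite longE => /andP[-> /eqP]. Qed.

Inductive weyl_orbit a : 'rV[R]_n -> Prop :=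
  | weyl_orbit_self : weyl_orbit a a
  | weyl_orbit_refl x g : weyl_orbit a x -> g \in Phi -> weyl_orbit a (refl g x).

Lemma weyl_orbit_root a x : a \in Phi -> weyl_orbit a x ->
  x \in Phi /\ dotv x x = dotv a a.
Proof.
move=> aPhi; elim=> [|y g _ [yPhi <-] gPhi]; first by [].
by rewrite refl_root // dotv_refl2 // root_neq0.
Qed.

Lemma weyl_orbit_nonorthogonal a b : a \in Phi -> b \in Phi ->
  exists2 x, weyl_orbit a x & dotv x b != 0.
Proof.
move=> aPhi; pose P g := `[< exists2 x, weyl_orbit a x & dotv x g != 0 >].
case: PhiI => _ /(_ P) [].
- move=> g h gPhi hPhi /asboolP[x ax xg] /asboolP hP.
  have orth y : weyl_orbit a y -> dotv y h = 0.
    by move=> ay; apply: contra_notP hP => /eqP yh; exists y.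
  have := orth _ (weyl_orbit_refl ax gPhi).
  rewrite dotv_refl orth // sub0r => /eqP; rewrite oppr_eq0 mulf_eq0 cartan_eq0.
    by rewrite (negbTE xg) => /eqP.
  exact: root_neq0.
- by move=> /allP P_Phi bPhi; apply/asboolP/P_Phi.
- move=> /allP/(_ a aPhi)/asboolP[]; exists a; first exact: weyl_orbit_self.
  exact/lt0r_neq0/dotv_gt0/root_neq0.
Qed.

Lemma dotv_root_extremal a : a \in Phi ->
  dotv a a = maxsq Phi \/ dotv a a = minsq Phi.
Proof.
(* |a|^2 / m, M / |a|^2 and M / m all lie in {1, 2, 3}, which rules out m < |a|^2 < M. *)
move=> aPhi; have [am amPhi am_m] := minsq_root; have [aM aMPhi aM_M] := maxsq_root.
have ratio x y : x \in Phi -> y \in Phi -> dotv x x <= dotv y y ->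
    [\/ dotv y y = dotv x x, dotv y y = 2 * dotv x x | dotv y y = 3 * dotv x x].
  move=> xPhi yPhi xy; have [z xz zy] := weyl_orbit_nonorthogonal xPhi yPhi.
  have [zPhi <-] := weyl_orbit_root xPhi xz.
  by apply: dotv_root_ratio => //; have [_ ->] := weyl_orbit_root xPhi xz.
have m_a := ratio _ _ amPhi aPhi ltac:(by rewrite am_m minsq_le).
have a_M := ratio _ _ aPhi aMPhi ltac:(by rewrite aM_M maxsq_ge).
have m_M := ratio _ _ amPhi aMPhi ltac:(by rewrite am_m minsq_le).
have := minsq_gt0; rewrite aM_M am_m in m_a a_M m_M.
by case: m_a; case: a_M; case: m_M; lra.
Qed.

(** * Coordinates in a basis *)

Lemma basis_root i : delta i \in Phi.
Proof. by case: DeltaB => + _ _; apply; exact: mem_tnth. Qed.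

Lemma basis_neq0 i : delta i != 0.
Proof. exact/root_neq0/basis_root. Qed.

Lemma coef_decomp x : x = \sum_i coef i x *: delta i.
Proof.
have x_span : x \in span Delta.
  have : (span Phi <= span Delta)%VS.
    apply/span_subvP => g gPhi; case: DeltaB => _ _ /(_ g gPhi)[k [-> _]].
    by apply: memv_suml => i _; apply/memvZ/memv_span/mem_tnth.
  by case: PhiR => _ -> _ _ _ /subvP; apply; exact: memvf.
by rewrite {1}(coord_span x_span); apply: eq_bigr => i _; rewrite (tnth_nth 0).
Qed.

Lemma coefD i x y : coef i (x + y) = coef i x + coef i y.
Proof. exact: linearD. Qed.
Lemma coefZ i k x : coef i (k *: x) = k * coef i x.
Proof. exact: linearZ. Qed.
Lemma coefN i x : coef i (- x) = - coef i x.
Proof. exact: linearN. Qed.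
Lemma coefB i x y : coef i (x - y) = coef i x - coef i y.
Proof. exact: linearB. Qed.
Lemma coef0 i : coef i 0 = 0.
Proof. exact: linear0. Qed.

Lemma coef_sum (k : 'I_l -> R) j : coef j (\sum_i k i *: delta i) = k j.
Proof.
case: DeltaB => _ free_Delta _; rewrite /Defs.coef -(coord_sum_free k j free_Delta).
by congr coord; apply: eq_bigr => i _; rewrite (tnth_nth 0).
Qed.

Lemma coef_basis i j : coef j (delta i) = (i == j)%:R.
Proof. by case: DeltaB => _ free_Delta _; rewrite /Defs.coef (tnth_nth 0) coord_free. Qed.

Lemma coef_inj x y : (forall i, coef i x = coef i y) -> x = y.
Proof.
by move=> xy; rewrite (coef_decomp x) (coef_decomp y); apply: eq_bigr => i _; rewrite xy.
Qed.

Lemma coef_root_int a i : a \in Phi -> coef i a \is a Num.int.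
Proof.
by case: DeltaB => _ _ /[apply] -[k [-> _]]; rewrite coef_sum intr_int.
Qed.

Lemma root_coef_sign a : a \in Phi ->
  (forall i, 0 <= coef i a) \/ (forall i, coef i a <= 0).
Proof.
case: DeltaB => _ _ /[apply] -[k [-> k_sign]].
by case: k_sign => k_sign; [left|right] => i; rewrite coef_sum ?ler0z ?lerz0.
Qed.

Lemma rle_coef x y : rle Delta y x <-> forall i, coef i y <= coef i x.
Proof.
split=> [[k [k_ge0 e]] i|yx]; first by rewrite -subr_ge0 -coefB e coef_sum.
exists (fun i => coef i x - coef i y); split=> [i|]; first by rewrite subr_ge0.
by rewrite {1}(coef_decomp (x - y)); apply: eq_bigr => i _; rewrite coefB.
Qed.

Lemma rlexx x : rle Delta x x.
Proof. exact/rle_coef. Qed.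

Lemma rle_trans x y z : rle Delta x y -> rle Delta y z -> rle Delta x z.
Proof. by move=> /rle_coef xy /rle_coef yz; apply/rle_coef => i; apply: le_trans (yz i). Qed.

Lemma rlt0_coef x : rlt Delta 0 x <-> (forall i, 0 <= coef i x) /\ x != 0.
Proof.
rewrite /rlt rle_coef; split=> -[x_ge0 x0]; split.
- by move=> i; rewrite -(coef0 i).
- by apply/eqP => e; apply: x0; rewrite e.
- by move=> i; rewrite coef0.
- by move=> e; move/eqP: x0; apply; rewrite -e.
Qed.

Lemma rltr0_coef x : rlt Delta x 0 <-> (forall i, coef i x <= 0) /\ x != 0.
Proof.
rewrite /rlt rle_coef; split=> -[x_le0 x0]; split.
- by move=> i; rewrite -(coef0 i).
- exact/eqP.
- by move=> i; rewrite coef0.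
- exact/eqP.
Qed.

Lemma rltr0_not_rlt0 x : rlt Delta x 0 -> ~ rlt Delta 0 x.
Proof.
move=> /rltr0_coef[x_le0 x0] /rlt0_coef[x_ge0 _]; move/eqP: x0; apply.
by apply: coef_inj => i; rewrite coef0; apply/eqP; rewrite eq_le x_le0 x_ge0.
Qed.

Lemma root_rlt0_or_rltr0 a : a \in Phi -> rlt Delta 0 a \/ rlt Delta a 0.
Proof.
move=> aPhi; have a0 := root_neq0 aPhi.
by case: (root_coef_sign aPhi) => ?; [left; apply/rlt0_coef | right; apply/rltr0_coef].
Qed.

Lemma rlt0_rle_trans x y : rlt Delta 0 x -> rle Delta x y -> rlt Delta 0 y.
Proof.
move=> /rlt0_coef[x_ge0 x0] /rle_coef xy; apply/rlt0_coef; split=> [i|].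
  exact: le_trans (xy i).
apply: contraNneq x0 => y0; apply/eqP/coef_inj => i; rewrite coef0; apply/eqP.
by rewrite eq_le x_ge0 andbT; have := xy i; rewrite y0 coef0.
Qed.

Lemma rle_rltr0_trans x y : rle Delta x y -> rlt Delta y 0 -> rlt Delta x 0.
Proof.
move=> /rle_coef xy /rltr0_coef[y_le0 y0]; apply/rltr0_coef; split=> [i|].
  exact: le_trans (y_le0 i).
apply: contraNneq y0 => x0; apply/eqP/coef_inj => i; rewrite coef0; apply/eqP.
by rewrite eq_le y_le0 /=; have := xy i; rewrite x0 coef0.
Qed.

Lemma rlt0_basis i : rlt Delta 0 (delta i).
Proof. by apply/rlt0_coef; split=> [j|]; rewrite ?coef_basis ?ler0n ?basis_neq0. Qed.

Lemma rltr0_oppr_basis i : rlt Delta (- delta i) 0.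
Proof.
apply/rltr0_coef; split=> [j|]; last by rewrite oppr_eq0 basis_neq0.
by rewrite coefN coef_basis oppr_le0 ler0n.
Qed.

Lemma rlt0_oppr x : rlt Delta x 0 -> rlt Delta 0 (- x).
Proof.
move=> /rltr0_coef[x_le0 x0]; apply/rlt0_coef.
by split=> [i|]; rewrite ?coefN ?oppr_ge0 ?oppr_eq0.
Qed.

Lemma exists_coef_gt0 x : (forall i, 0 <= coef i x) -> x != 0 -> exists i, 0 < coef i x.
Proof.
move=> x_ge0; apply: contraNP => no_pos; apply/eqP/coef_inj => i.
rewrite coef0; apply/eqP; rewrite eq_le x_ge0 andbT leNgt.
by apply/negP => ?; apply: no_pos; exists i.
Qed.

Lemma coef_refl_basis i j y :
  coef j (refl (delta i) y) = coef j y - cartan y (delta i) * (i == j)%:R.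
Proof. by rewrite reflE coefB coefZ coef_basis. Qed.

Lemma root_eq_basis g i : g \in Phi -> (forall j, 0 <= coef j g) ->
  (forall j, j != i -> coef j g = 0) -> g = delta i.
Proof.
move=> gPhi g_ge0 g_supp.
have eg : g = coef i g *: delta i.
  apply: coef_inj => j; rewrite coefZ coef_basis.
  by case: (eqVneq i j) => [<-|ij]; rewrite ?mulr1 // mulr0 g_supp // eq_sym.
have [gi1|gi1] := root_proportional gPhi (basis_root i) eg.
  by rewrite eg gi1 scale1r.
by have := g_ge0 i; rewrite gi1 ler0N1.
Qed.

(** * Integrality of coroots *)

Definition height x : R := \sum_i coef i x.

Lemma heightB x y : height (x - y) = height x - height y.
Proof. by rewrite /height -sumrB; apply: eq_bigr => i _; rewrite coefB. Qed.

Lemma heightZ_basis k i : height (k *: delta i) = k.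
Proof.
rewrite /height (bigD1 i) //= big1 => [|j ji]; last first.
  by rewrite coefZ coef_basis eq_sym (negbTE ji) mulr0.
by rewrite coefZ coef_basis eqxx mulr1 addr0.
Qed.

Lemma root_height_ge1 g : g \in Phi -> (forall i, 0 <= coef i g) -> 1 <= height g.
Proof.
move=> gPhi g_ge0; have [i gi_gt0] := exists_coef_gt0 g_ge0 (root_neq0 gPhi).
rewrite /height (bigD1 i) //=; apply: le_trans (gt0_intr_ge1 (coef_root_int i gPhi) gi_gt0) _.
by rewrite lerDl sumr_ge0.
Qed.

Lemma dotv_coef g y : dotv g y = \sum_i coef i g * dotv (delta i) y.
Proof. by rewrite {1}(coef_decomp g) dotv_suml; apply: eq_bigr => i _; rewrite dotvZl. Qed.

Lemma exists_coef_dotv_gt0 g y : 0 < dotv g y ->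
  exists i, 0 < coef i g * dotv (delta i) y.
Proof.
move=> gy; have [//|no_pos] := EM (exists i, 0 < coef i g * dotv (delta i) y).
move: gy; rewrite ltNge dotv_coef sumr_le0 // => i _; rewrite leNgt.
by apply/negP => ?; apply: no_pos; exists i.
Qed.

Lemma nonsimple_root_descent g : g \in Phi -> (forall i, 0 <= coef i g) ->
  (forall i, g != delta i) ->
  exists i, [/\ forall j, 0 <= coef j (refl (delta i) g), 1 <= cartan g (delta i) &
    height (refl (delta i) g) = height g - cartan g (delta i)].
Proof.
move=> gPhi g_ge0 g_nsimple.
have [i gi_pos] := exists_coef_dotv_gt0 (dotv_gt0 (root_neq0 gPhi)).
have gi_gt0 : 0 < coef i g.
  by rewrite lt_neqAle g_ge0 andbT; apply: contraTneq gi_pos => <-; rewrite mul0r ltxx.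
have dig_gt0 : 0 < dotv (delta i) g by rewrite pmulr_rgt0 in gi_pos.
have cartan_ge1 : 1 <= cartan g (delta i).
  apply: gt0_intr_ge1; first exact: cartan_int (basis_root i) gPhi.
  by rewrite /cartan dotvC divr_gt0 ?mulr_gt0 ?dotv_gt0 ?basis_neq0.
exists i; split=> //; last by rewrite reflE heightB heightZ_basis.
have [j ji gj_gt0] : exists2 j, j != i & 0 < coef j g.
  have [//|no_other] := EM (exists2 j, j != i & 0 < coef j g).
  have /eqP[] := g_nsimple i; apply: root_eq_basis => // j ji.
  apply/eqP; rewrite eq_le g_ge0 andbT leNgt.
  by apply/negP => ?; apply: no_other; exists j.
have [//|sg_le0] := root_coef_sign (refl_root (basis_root i) gPhi).
by have := sg_le0 j; rewrite coef_refl_basis eq_sym (negbTE ji) mulr0 subr0 leNgt gj_gt0.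
Qed.

(* The coroot [2 g / |g|^2] has integral coordinates on the simple coroots. *)
Definition integral_coroot g :=
  forall i, coef i g * dotv (delta i) (delta i) / dotv g g \is a Num.int.

Lemma integral_coroot_basis j : integral_coroot (delta j).
Proof.
move=> i; rewrite coef_basis; case: eqP => [->|_]; last by rewrite !mul0r rpred0.
by rewrite mul1r divff ?rpred1 // lt0r_neq0 ?dotv_gt0 ?basis_neq0.
Qed.

Lemma integral_coroot_refl y i : y \in Phi -> integral_coroot y ->
  integral_coroot (refl (delta i) y).
Proof.
move=> yPhi y_int j; rewrite dotv_refl2 ?basis_neq0 // coef_refl_basis.
case: (eqVneq i j) => [<-|ij]; last by rewrite mulr0 subr0.
have -> : (coef i y - cartan y (delta i) * 1%:R) * dotv (delta i) (delta i) / dotv y y =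
    coef i y * dotv (delta i) (delta i) / dotv y y - cartan (delta i) y.
  by rewrite /cartan (dotvC y); field; rewrite !lt0r_neq0 ?dotv_gt0 ?basis_neq0 ?root_neq0.
by rewrite rpredB ?cartan_int ?basis_root.
Qed.

Lemma integral_coroot_oppr g : integral_coroot g -> integral_coroot (- g).
Proof. by move=> g_int i; rewrite coefN dotvNl dotvNr opprK !mulNr rpredN. Qed.

Lemma integral_coroot_root g : g \in Phi -> integral_coroot g.
Proof.
have pos_int k : forall x, x \in Phi -> (forall i, 0 <= coef i x) ->
    height x <= k%:R -> integral_coroot x.
  elim: k => [|k IHk] x xPhi x_ge0 x_k.
    by have := root_height_ge1 xPhi x_ge0; lra.
  have [[i ->]|x_nsimple] := EM (exists i, x = delta i); first exact: integral_coroot_basis.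
  have x_ns i : x != delta i by apply/eqP => xi; apply: x_nsimple; exists i.
  have [i [sx_ge0 cartan_ge1 h_sx]] := nonsimple_root_descent xPhi x_ge0 x_ns.
  have sxPhi := refl_root (basis_root i) xPhi.
  rewrite -(reflK (basis_neq0 i) x); apply: integral_coroot_refl => //.
  by apply: IHk => //; rewrite h_sx; move: x_k; rewrite -natr1; lra.
move=> gPhi.
have pos_root y : y \in Phi -> (forall i, 0 <= coef i y) -> integral_coroot y.
  move=> yPhi y_ge0; have /intrP[z ez] : height y \is a Num.int.
    by apply: rpred_sum => i _; exact: coef_root_int.
  by apply: (pos_int `|z|%N) => //; rewrite ez natr_absz ler_int ler_norm.
case: (root_coef_sign gPhi) => g_sign; first exact: pos_root.
rewrite -(opprK g); apply/integral_coroot_oppr/pos_root; first exact: oppr_root.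
by move=> i; rewrite coefN oppr_ge0.
Qed.

(** * Dual height and levels *)

Local Notation M := (maxsq Phi).
Local Notation htv := (htv Phi Delta).

(* Short simple roots have squared length [minsq Phi], as only two root lengths occur. *)
Lemma htvE g : htv g = \sum_i dotv (delta i) (delta i) / M * coef i g.
Proof.
rewrite /Defs.htv [RHS](bigID (fun i => long Phi (delta i))) /=; congr (_ + _).
  apply: eq_bigr => i /longP[_ ->]; rewrite divff ?mul1r //.
  exact: lt0r_neq0 maxsq_gt0.
rewrite mulr_sumr; apply: eq_bigr => i i_short; congr (_ * _).
have [i_long|->] := dotv_root_extremal (basis_root i).
  by move: i_short; rewrite longE basis_root i_long eqxx.
by rewrite /ratio invf_div.
Qed.

Lemma htvB x y : htv (x - y) = htv x - htv y.
Proof. by rewrite !htvE -sumrB; apply: eq_bigr => i _; rewrite coefB mulrBr. Qed.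

Lemma htvZ k x : htv (k *: x) = k * htv x.
Proof. by rewrite !htvE mulr_sumr; apply: eq_bigr => i _; rewrite coefZ mulrCA. Qed.

Lemma htvN x : htv (- x) = - htv x.
Proof. by rewrite -scaleN1r htvZ mulN1r. Qed.

Lemma htv_basis i : htv (delta i) = dotv (delta i) (delta i) / M.
Proof.
rewrite htvE (bigD1 i) //= coef_basis eqxx mulr1 big1 ?addr0 // => j ji.
by rewrite coef_basis eq_sym (negbTE ji) mulr0.
Qed.

Lemma htv_basis_long i : long Phi (delta i) -> htv (delta i) = 1.
Proof. by move=> /longP[_ ii]; rewrite htv_basis ii divff // lt0r_neq0 // maxsq_gt0. Qed.

Lemma htv_weight_gt0 i : 0 < dotv (delta i) (delta i) / M.
Proof. by rewrite divr_gt0 ?maxsq_gt0 ?dotv_gt0 ?basis_neq0. Qed.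

Lemma htv_le x y : rle Delta x y -> htv x <= htv y.
Proof.
move=> /rle_coef xy; rewrite -subr_ge0 -htvB htvE sumr_ge0 // => i _.
by rewrite mulr_ge0 ?coefB ?subr_ge0 // ltW // htv_weight_gt0.
Qed.

Lemma htv_gt0 g : rlt Delta 0 g -> 0 < htv g.
Proof.
move=> /rlt0_coef[g_ge0 g0]; have [i gi_gt0] := exists_coef_gt0 g_ge0 g0.
rewrite htvE (bigD1 i) //=; apply: lt_le_trans (mulr_gt0 (htv_weight_gt0 i) gi_gt0) _.
by rewrite lerDl sumr_ge0 // => j _; rewrite mulr_ge0 // ltW // htv_weight_gt0.
Qed.

(* The [i]-th term of [htv z] is the [i]-th coordinate of the coroot of [z]. *)
Lemma htv_term_int z i : long Phi z -> dotv (delta i) (delta i) / M * coef i z \is a Num.int.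
Proof.
by move=> /longP[zPhi zz]; rewrite mulrC mulrA -zz integral_coroot_root.
Qed.

Lemma htv_long_int z : long Phi z -> htv z \is a Num.int.
Proof. by move=> z_long; rewrite htvE rpred_sum // => i _; exact: htv_term_int. Qed.

Lemma htv_long_ge1 z : long Phi z -> rlt Delta 0 z -> 1 <= htv z.
Proof. by move=> z_long z_gt0; rewrite gt0_intr_ge1 ?htv_long_int ?htv_gt0. Qed.

Lemma htv_long_eq1 z : long Phi z -> rlt Delta 0 z -> htv z = 1 ->
  exists i, z = delta i /\ long Phi (delta i).
Proof.
move=> z_long z_gt0 hz1; have /rlt0_coef[z_ge0 z0] := z_gt0.
have [i zi_gt0] := exists_coef_gt0 z_ge0 z0.
have term_ge0 j : 0 <= dotv (delta j) (delta j) / M * coef j z.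
  by rewrite mulr_ge0 // ltW // htv_weight_gt0.
have term_i : 1 <= dotv (delta i) (delta i) / M * coef i z.
  by apply: gt0_intr_ge1; [exact: htv_term_int | rewrite mulr_gt0 ?htv_weight_gt0].
move: hz1; rewrite htvE (bigD1 i) //= => hz1.
have rest0 : \sum_(j | j != i) dotv (delta j) (delta j) / M * coef j z = 0.
  have : 0 <= \sum_(j | j != i) dotv (delta j) (delta j) / M * coef j z.
    by apply: sumr_ge0 => j _; exact: term_ge0.
  by move: hz1 term_i; set S := \sum_(j | _) _; set t := _ * coef i z; lra.
have zi : z = delta i.
  apply: root_eq_basis; [by case/longP: z_long | exact: z_ge0 | move=> j ji].
  have /eqP := psumr_eq0P (fun j _ => term_ge0 j) rest0 ji.
  by rewrite mulf_eq0 (gt_eqF (htv_weight_gt0 j)) => /eqP.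
by exists i; rewrite -zi.
Qed.

Lemma level_gt0 x : rlt Delta 0 x -> level Phi Delta ta x = htv ta - htv x.
Proof. by move=> x_gt0; rewrite /level asboolT. Qed.

Lemma level_lt0 x : rlt Delta x 0 -> level Phi Delta ta x = htv ta - htv x - 1.
Proof. by move=> x_lt0; rewrite /level asboolF //; exact: rltr0_not_rlt0. Qed.

Lemma long_root x : long Phi x -> x \in Phi.
Proof. by case/longP. Qed.

Lemma long_refl g x : g \in Phi -> long Phi x -> long Phi (refl g x).
Proof.
move=> gPhi /longP[xPhi xx].
by rewrite longE refl_root //= dotv_refl2 ?xx ?root_neq0.
Qed.

Lemma long_oppr x : long Phi x -> long Phi (- x).
Proof. by move=> /longP[xPhi xx]; rewrite longE oppr_root //= dotvNl dotvNr opprK xx. Qed.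

(** * Simple paths *)

Lemma exists_basis_descent a b : long Phi a -> long Phi b -> rle Delta a b -> a != b ->
  exists i, 0 < coef i (b - a) /\ 0 < dotv (delta i) b.
Proof.
move=> /longP[aPhi aa] /longP[bPhi bb] /rle_coef ab ab_neq.
have : 0 < dotv (b - a) b.
  have := dotv_gt0 (x := a - b); rewrite subr_eq0 => /(_ ab_neq).
  by rewrite !(dotvBl, dotvBr) aa bb (dotvC b a); lra.
move=> /exists_coef_dotv_gt0[i i_pos]; exists i.
have i_ge0 : 0 <= coef i (b - a) by rewrite coefB subr_ge0.
have i_gt0 : 0 < coef i (b - a).
  by rewrite lt_neqAle i_ge0 andbT; apply: contraTneq i_pos => <-; rewrite mul0r ltxx.
by rewrite i_gt0 -(pmulr_rgt0 _ i_gt0).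
Qed.

Lemma cartan_basis_long b i : long Phi b -> 0 < dotv (delta i) b -> delta i != b ->
  cartan (delta i) b = 1.
Proof.
move=> /longP[bPhi bb] ib_gt0 ib_neq.
have i_npar k : delta i <> k *: b.
  move=> ik; have [k1|k1] := root_proportional (basis_root i) bPhi ik.
    by move/eqP: ib_neq; rewrite ik k1 scale1r.
  by move: ib_gt0; rewrite ik k1 scaleN1r dotvNl bb oppr_gt0 ltNge ltW ?maxsq_gt0.
have ii_le : dotv (delta i) (delta i) <= dotv b b by rewrite bb maxsq_ge ?basis_root.
have cartan_gt0 : 0 < cartan (delta i) b.
  by rewrite /cartan divr_gt0 ?mulr_gt0 ?dotv_gt0 ?root_neq0.
have [//|cartan_N1] := cartan_shorter (basis_root i) bPhi ii_le i_npar (lt0r_neq0 ib_gt0).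
by move: cartan_gt0; rewrite cartan_N1 ltr0N1.
Qed.

Lemma cartan_long_basis b i : long Phi b -> 0 < dotv (delta i) b -> delta i != b ->
  cartan b (delta i) = M / dotv (delta i) (delta i).
Proof.
move=> b_long ib_gt0 ib_neq; have /longP[bPhi bb] := b_long.
have := cartan_rel (basis_neq0 i) (root_neq0 bPhi).
rewrite cartan_basis_long // mulr1 bb => ->.
by rewrite [dotv _ _ * _]mulrC mulfK // lt0r_neq0 ?dotv_gt0 ?basis_neq0.
Qed.

Lemma htv_refl_basis_long b i : long Phi b -> 0 < dotv (delta i) b -> delta i != b ->
  htv (refl (delta i) b) = htv b - 1.
Proof.
move=> b_long ib_gt0 ib_neq; rewrite reflE cartan_long_basis // htvB htvZ htv_basis.
by rewrite mulrA divfK ?divff // lt0r_neq0 ?maxsq_gt0 ?dotv_gt0 ?basis_neq0.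
Qed.

Lemma rle_refl_basis a b i : long Phi a -> long Phi b -> rle Delta a b ->
  0 < coef i (b - a) -> 0 < dotv (delta i) b -> delta i != b ->
  rle Delta a (refl (delta i) b).
Proof.
move=> a_long b_long /rle_coef ab iba_gt0 ib_gt0 ib_neq; apply/rle_coef => j.
rewrite reflE coefB coefZ coef_basis cartan_long_basis //.
case: (eqVneq i j) => [<-|_]; last by rewrite mulr0 subr0.
have w_gt0 := htv_weight_gt0 i.
have : 1 <= dotv (delta i) (delta i) / M * coef i (b - a).
  apply: gt0_intr_ge1; last by rewrite mulr_gt0.
  by rewrite coefB mulrBr rpredB ?htv_term_int.
by rewrite -ler_pdivrMl // mulr1 invf_div coefB mulr1; lra.
Qed.

Lemma arrow_refl_basis b i : long Phi b -> 0 < dotv (delta i) b -> delta i != b ->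
  (rlt Delta 0 b /\ rlt Delta 0 (refl (delta i) b)) \/
  (rlt Delta b 0 /\ rlt Delta (refl (delta i) b) 0) ->
  arrow Phi Delta ta b (delta i) (refl (delta i) b).
Proof.
move=> b_long ib_gt0 ib_neq b_sign.
split=> //; [by rewrite b_long long_refl ?basis_root | exact: basis_root | exact: rlt0_basis |].
have htv_sb := htv_refl_basis_long b_long ib_gt0 ib_neq.
by case: b_sign => -[b_sign sb_sign];
  rewrite ?(level_gt0 b_sign) ?(level_gt0 sb_sign) ?(level_lt0 b_sign) ?(level_lt0 sb_sign)
    htv_sb; ring.
Qed.

Lemma refl_basis_rle b i : long Phi b -> 0 < dotv (delta i) b -> delta i != b ->
  rle Delta (refl (delta i) b) b.
Proof.
move=> b_long ib_gt0 ib_neq; apply/rle_coef => j.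
rewrite reflE cartan_long_basis // coefB coefZ coef_basis gerBl.
by rewrite mulr_ge0 ?ler0n // ltW // divr_gt0 ?maxsq_gt0 ?dotv_gt0 ?basis_neq0.
Qed.

Lemma long_rle_basis_eq a i : long Phi a -> rlt Delta 0 a -> rle Delta a (delta i) ->
  a = delta i.
Proof.
move=> a_long /rlt0_coef[a_ge0 _] /rle_coef ai.
apply: root_eq_basis => [||j ji]; [exact: long_root | exact: a_ge0 | apply/eqP].
by rewrite eq_le a_ge0 andbT; have := ai j; rewrite coef_basis eq_sym (negbTE ji).
Qed.

Lemma simple_descent_step a b : long Phi a -> long Phi b -> rle Delta a b -> a != b ->
  rlt Delta 0 a \/ rlt Delta b 0 ->
  exists i, [/\ arrow Phi Delta ta b (delta i) (refl (delta i) b),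
    rle Delta a (refl (delta i) b),
    rlt Delta 0 a \/ rlt Delta (refl (delta i) b) 0 &
    htv (refl (delta i) b) = htv b - 1].
Proof.
move=> a_long b_long ab ab_neq sign.
have [i [iba_gt0 ib_gt0]] := exists_basis_descent a_long b_long ab ab_neq.
have ib_neq : delta i != b.
  apply/eqP => ib; case: sign => [a_gt0|b_lt0].
    by move/eqP: ab_neq; apply; rewrite -ib; apply: long_rle_basis_eq; rewrite ?ib.
  by apply: (rltr0_not_rlt0 b_lt0); rewrite -ib; exact: rlt0_basis.
have a_sb := rle_refl_basis a_long b_long ab iba_gt0 ib_gt0 ib_neq.
have sb_b := refl_basis_rle b_long ib_gt0 ib_neq.
exists i; split=> //; last exact: htv_refl_basis_long.
- apply: arrow_refl_basis => //; case: sign => [a_gt0|b_lt0]; [left|right].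
    by split; [apply: rlt0_rle_trans ab | apply: rlt0_rle_trans a_sb].
  by split; last apply: rle_rltr0_trans sb_b b_lt0.
- by case: sign => [|b_lt0]; [left | right; apply: rle_rltr0_trans sb_b b_lt0].
Qed.

Lemma simple_path_exists a b : long Phi a -> long Phi b -> rle Delta a b ->
  rlt Delta 0 a \/ rlt Delta b 0 -> has_simple_path Phi Delta ta b a.
Proof.
move=> a_long b_long ab sign; split=> //.
have /intrP[z ez] : htv b - htv a \is a Num.int by rewrite rpredB ?htv_long_int.
have : htv b - htv a <= `|z|%N%:R by rewrite ez natr_absz ler_int ler_norm.
elim: `|z|%N b b_long ab sign {ez} => [|k IHk] b b_long ab sign b_le;
  have [<-|ab_neq] := eqVneq a b; try by exists [::].
all: have [i [b_sb a_sb sign' htv_sb]] := simple_descent_step a_long b_long ab ab_neq sign.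
all: have := htv_le a_sb; rewrite htv_sb => a_sb_htv.
  by move: b_le; lra.
have [|s [sb_a s_simple]] := IHk _ (long_refl (basis_root i) b_long) a_sb sign'.
  by move: b_le; rewrite -natr1; lra.
by exists ((delta i, refl (delta i) b) :: s); rewrite /= mem_tnth.
Qed.

(** * Paths crossing zero *)

Lemma is_path_cat b c a s1 s2 : is_path Phi Delta ta b s1 c ->
  is_path Phi Delta ta c s2 a -> is_path Phi Delta ta b (s1 ++ s2) a.
Proof.
elim: s1 b => [|[g b1] s IHs] b /= => [-> //|[b_b1 b1_c] c_a].
by split; last exact: IHs c_a.
Qed.

Lemma arrow_htv_sub x g y : arrow Phi Delta ta x g y ->
  htv x - htv y = cartan x g * htv g.
Proof. by case=> _ _ _ -> _; rewrite reflE htvB htvZ opprB addrC subrK. Qed.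

Lemma arrow_cross_htv x g y : arrow Phi Delta ta x g y ->
  rlt Delta 0 x -> rlt Delta y 0 -> htv x - htv y = 2.
Proof. by case=> _ _ _ _ + x_gt0 y_lt0; rewrite (level_gt0 x_gt0) (level_lt0 y_lt0); lra. Qed.

Lemma arrow_rle x g y : arrow Phi Delta ta x g y -> rle Delta y x.
Proof.
move=> xy; have [/andP[x_long y_long] gPhi g_gt0 ey lev_xy] := xy.
have htv_g := htv_gt0 g_gt0.
suff c_gt0 : 0 < cartan x g.
  have /rlt0_coef[g_ge0 _] := g_gt0; apply/rle_coef => j.
  by rewrite ey reflE coefB coefZ gerBl mulr_ge0 // ltW.
rewrite -(pmulr_lgt0 _ htv_g) -(arrow_htv_sub xy).
case: (root_rlt0_or_rltr0 (long_root x_long)) => x_sign;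
  case: (root_rlt0_or_rltr0 (long_root y_long)) => y_sign;
  move: lev_xy; rewrite ?(level_gt0 x_sign) ?(level_lt0 x_sign)
    ?(level_gt0 y_sign) ?(level_lt0 y_sign); try lra.
move=> lev_xy; have : cartan x g * htv g = 0 by rewrite -(arrow_htv_sub xy); lra.
move/eqP; rewrite mulf_eq0 (gt_eqF htv_g) orbF => /eqP c0.
exfalso; apply: (rltr0_not_rlt0 x_sign); suff -> : x = y by [].
by rewrite ey reflE c0 scale0r subr0.
Qed.

Lemma path_rle b s a : is_path Phi Delta ta b s a -> rle Delta a b.
Proof.
elim: s b => [|[g b1] s IHs] b /= => [->|[b_b1 b1_a]]; first exact: rlexx.
exact: rle_trans (IHs _ b1_a) (arrow_rle b_b1).
Qed.

Lemma path_cross_zero b s a : is_path Phi Delta ta b s a ->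
  rlt Delta 0 b -> rlt Delta a 0 ->
  exists x g y, [/\ arrow Phi Delta ta x g y, rlt Delta 0 x, rlt Delta y 0,
    rle Delta x b /\ rle Delta a y & (g, y) \in s].
Proof.
elim: s b => [|[g b1] s IHs] b /=; first by move=> -> b_gt0 /rltr0_not_rlt0.
move=> [b_b1 b1_a] b_gt0 a_lt0; have [/andP[_ b1_long] _ _ _ _] := b_b1.
case: (root_rlt0_or_rltr0 (long_root b1_long)) => b1_sign.
  have [x [h [y [xy x_gt0 y_lt0 [xb1 ay] hy_s]]]] := IHs _ b1_a b1_sign a_lt0.
  exists x, h, y; split=> //; last by rewrite in_cons hy_s orbT.
  by split=> //; exact: rle_trans xb1 (arrow_rle b_b1).
exists b, g, b1; split=> //; last exact: mem_head.
by split; [exact: rlexx | exact: path_rle b1_a].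
Qed.

Lemma crossing_arrow_basis x g y : arrow Phi Delta ta x g y ->
  rlt Delta 0 x -> rlt Delta y 0 ->
  exists i j, [/\ x = delta i, y = - delta j, long Phi (delta i) & long Phi (delta j)].
Proof.
move=> xy x_gt0 y_lt0; have htv2 := arrow_cross_htv xy x_gt0 y_lt0.
have [/andP[x_long y_long] _ _ _ _] := xy.
have Ny_gt0 := rlt0_oppr y_lt0; have Ny_long := long_oppr y_long.
have x1 := htv_long_ge1 x_long x_gt0; have y1 := htv_long_ge1 Ny_long Ny_gt0.
rewrite htvN in y1.
have [i [-> i_long]] := htv_long_eq1 x_long x_gt0 ltac:(lra).
have [j [ej j_long]] := htv_long_eq1 Ny_long Ny_gt0 ltac:(rewrite htvN; lra).
by exists i, j; rewrite -ej opprK.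
Qed.

Lemma rle_basis_root b i : b \in Phi -> rlt Delta 0 b -> coef i b != 0 ->
  rle Delta (delta i) b.
Proof.
move=> bPhi /rlt0_coef[b_ge0 _] bi0; apply/rle_coef => j; rewrite coef_basis.
case: eqP => [<-|_]; last exact: b_ge0.
by rewrite gt0_intr_ge1 ?coef_root_int // lt_neqAle eq_sym bi0 b_ge0.
Qed.

Lemma rle_root_oppr_basis a i : a \in Phi -> rlt Delta a 0 -> coef i a != 0 ->
  rle Delta a (- delta i).
Proof.
move=> aPhi a_lt0 ai0; have /rle_coef Nai := rle_basis_root (i := i) (oppr_root aPhi)
  (rlt0_oppr a_lt0) ltac:(by rewrite coefN oppr_eq0).
by apply/rle_coef => j; rewrite coefN lerNr -coefN Nai.
Qed.

Lemma coef_neq0_rle_basis b i : rle Delta (delta i) b -> coef i b != 0.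
Proof.
move=> /rle_coef/(_ i); rewrite coef_basis eqxx => ib.
by rewrite gt_eqF // (lt_le_trans ltr01 ib).
Qed.

Lemma coef_neq0_rle_oppr_basis a i : rle Delta a (- delta i) -> coef i a != 0.
Proof.
move=> /rle_coef/(_ i); rewrite coefN coef_basis eqxx => ai.
by rewrite lt_eqF // (le_lt_trans ai) // oppr_lt0 ltr01.
Qed.

Lemma arrow_basis_cross i j g : long Phi (delta i) -> long Phi (delta j) -> g \in Phi ->
  rlt Delta 0 g -> refl g (delta i) = - delta j ->
  arrow Phi Delta ta (delta i) g (- delta j).
Proof.
move=> i_long j_long gPhi g_gt0 e; split=> //; first by rewrite i_long long_oppr.
rewrite (level_lt0 (rltr0_oppr_basis j)) (level_gt0 (rlt0_basis i)).
by rewrite htvN !htv_basis_long //; ring.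
Qed.

Lemma path_through_basis a b i j g : long Phi a -> long Phi b ->
  rlt Delta a 0 -> rlt Delta 0 b -> coef i b != 0 -> coef j a != 0 ->
  arrow Phi Delta ta (delta i) g (- delta j) ->
  exists2 s, is_path Phi Delta ta b s a &
    (g \in (Delta : seq _) -> all (fun p => p.1 \in (Delta : seq _)) s).
Proof.
move=> a_long b_long a_lt0 b_gt0 bi0 aj0 ij; have [/andP[i_long Nj_long] _ _ _ _] := ij.
have [_ [s1 [b_i s1_simple]]] := simple_path_exists i_long b_long
  (rle_basis_root (long_root b_long) b_gt0 bi0) (or_introl (rlt0_basis i)).
have [_ [s2 [j_a s2_simple]]] := simple_path_exists a_long Nj_long
  (rle_root_oppr_basis (long_root a_long) a_lt0 aj0) (or_intror (rltr0_oppr_basis j)).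
exists (s1 ++ (g, - delta j) :: s2); first exact: is_path_cat b_i _.
by move=> gD; rewrite all_cat s1_simple /= gD.
Qed.

Lemma refl_basis_oppr_basis i j k : refl (delta k) (delta i) = - delta j -> i = j.
Proof.
move=> e; case: (eqVneq i j) => // ij; exfalso; have ji : j != i by rewrite eq_sym.
have := congr1 (coef i) e; have := congr1 (coef j) e.
rewrite !coef_refl_basis !coefN !coef_basis !eqxx (negbTE ij) (negbTE ji).
by case: (eqVneq k j) => [->|kj]; rewrite ?(negbTE ji) ?(negbTE kj) /= ?mulr0 ?mulr1; lra.
Qed.

(* The coefficient at [i] of [<delta i, g^v> g = delta i + delta j] forces
   [<delta i, g^v> = 1 or -1], so [|g|^2 = 2 M + 2 (delta i | delta j)]. *)
Lemma dotv_basis_cross i j g : long Phi (delta i) -> long Phi (delta j) -> g \in Phi ->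
  refl g (delta i) = - delta j -> dotv (delta i) (delta j) != 0.
Proof.
move=> /longP[_ ii] /longP[_ jj] gPhi e.
case: (eqVneq i j) => [<-|ij]; first by rewrite ii lt0r_neq0 ?maxsq_gt0.
apply/eqP => ij0; set t := cartan (delta i) g.
have tg : t *: g = delta i + delta j by rewrite -[delta j]opprK -e reflE opprB addrC subrK.
have t2 : t ^+ 2 = 1.
  apply: (intr_mul_eq1 (v := coef i g)); rewrite ?cartan_int ?coef_root_int ?basis_root //.
  by rewrite -coefZ tg coefD !coef_basis eqxx eq_sym (negbTE ij) addr0.
have := maxsq_ge gPhi; have := maxsq_gt0.
have <- : dotv (t *: g) (t *: g) = dotv g g by rewrite dotvZl dotvZr mulrA -expr2 t2 mul1r.
by rewrite tg dotvDl !dotvDr ii jj ij0 dotvC ij0; lra.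
Qed.

(* [g = s_j (delta i) = delta i + delta j], because [<delta i, delta j^v> = -1]: the value 1
   would make [delta i - delta j] a root. *)
Lemma exists_root_refl_basis i j : i != j -> long Phi (delta i) -> long Phi (delta j) ->
  dotv (delta i) (delta j) != 0 ->
  exists2 g, g \in Phi /\ rlt Delta 0 g & refl g (delta i) = - delta j.
Proof.
move=> ij /longP[_ ii] /longP[_ jj] ij0; have ji : j != i by rewrite eq_sym.
have i_npar k : delta i <> k *: delta j.
  move=> e; have := congr1 (coef i) e; rewrite coefZ !coef_basis eqxx (negbTE ji).
  by rewrite mulr0; apply/eqP; rewrite oner_eq0.
have sjiPhi := refl_root (basis_root j) (basis_root i).
have ij_le : dotv (delta i) (delta i) <= dotv (delta j) (delta j) by rewrite ii jj.
have cartan_N1 : cartan (delta i) (delta j) = -1.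
  case: (cartan_shorter (basis_root i) (basis_root j) ij_le i_npar ij0) => // c1.
  case: (root_coef_sign sjiPhi) => [/(_ j)|/(_ i)];
    by rewrite coef_refl_basis c1 !coef_basis !eqxx ?(negbTE ij) ?(negbTE ji) /= mul1r
      ?sub0r ?subr0 ?oppr_ge0 ler10.
set g := refl (delta j) (delta i).
have eg : g = delta i + delta j by rewrite /g reflE cartan_N1 scaleN1r opprK.
have gg : dotv g g = M by rewrite /g dotv_refl2 ?ii ?basis_neq0.
have ij_half : dotv (delta i) (delta j) = - M / 2.
  move: cartan_N1; rewrite /cartan jj => /(congr1 ( *%R^~ M)).
  by rewrite divfK ?lt0r_neq0 ?maxsq_gt0 // mulN1r => <-; field.
exists g; last first.
  rewrite reflE /cartan gg eg dotvDr ii ij_half -eg.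
  have -> : 2 * (M + - M / 2) / M = 1.
    by field; exact: lt0r_neq0 maxsq_gt0.
  by rewrite scale1r eg opprD addrA subrr add0r.
split=> //; apply/rlt0_coef; split; last exact: root_neq0.
by move=> k; rewrite eg coefD !coef_basis addr_ge0 ?ler0n.
Qed.

Lemma has_simple_path_cross a b : long Phi a -> long Phi b ->
  rlt Delta a 0 -> rlt Delta 0 b ->
  has_simple_path Phi Delta ta b a <->
  exists i, [/\ long Phi (delta i), coef i b != 0 & coef i a != 0].
Proof.
move=> a_long b_long a_lt0 b_gt0; split=> [[_ [s [ba s_simple]]]|[i [i_long bi0 ai0]]].
  have [x [g [y [xy x_gt0 y_lt0 [xb ay] gy_s]]]] := path_cross_zero ba b_gt0 a_lt0.
  have [i [j [exi eyj i_long _]]] := crossing_arrow_basis xy x_gt0 y_lt0.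
  have /tnthP[k ek] : g \in (Delta : seq _) := allP s_simple _ gy_s.
  have [_ _ _ ey _] := xy; rewrite ek exi eyj in ey.
  rewrite exi in xb; rewrite eyj -(refl_basis_oppr_basis (esym ey)) in ay.
  by exists i; split; [| exact: coef_neq0_rle_basis xb | exact: coef_neq0_rle_oppr_basis ay].
have ii := arrow_basis_cross i_long i_long (basis_root i) (rlt0_basis i)
  (refl_self (basis_neq0 i)).
have [s ba s_simple] := path_through_basis a_long b_long a_lt0 b_gt0 bi0 ai0 ii.
by split=> //; exists s; split=> //; apply/s_simple/mem_tnth.
Qed.

Lemma has_path_cross a b : long Phi a -> long Phi b ->
  rlt Delta a 0 -> rlt Delta 0 b ->
  has_path Phi Delta ta b a <->
  exists i j, [/\ long Phi (delta i), coef i b != 0, long Phi (delta j), coef j a != 0 &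
    dotv (delta i) (delta j) != 0].
Proof.
move=> a_long b_long a_lt0 b_gt0; split=> [[_ [s ba]]|[i [j [i_long bi0 j_long aj0 ij0]]]].
  have [x [g [y [xy x_gt0 y_lt0 [xb ay] _]]]] := path_cross_zero ba b_gt0 a_lt0.
  have [i [j [exi eyj i_long j_long]]] := crossing_arrow_basis xy x_gt0 y_lt0.
  have [_ gPhi _ ey _] := xy; rewrite exi in xb ey; rewrite eyj in ay ey.
  exists i, j; split=> //; [exact: coef_neq0_rle_basis xb |
    exact: coef_neq0_rle_oppr_basis ay | exact: dotv_basis_cross gPhi (esym ey)].
have [eij|ij] := eqVneq i j.
  have [_ [s [ba _]]] : has_simple_path Phi Delta ta b a.
    by apply/has_simple_path_cross => //; exists i; split; rewrite // eij.
  by split=> //; exists s.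
have [g [gPhi g_gt0] e] := exists_root_refl_basis ij i_long j_long ij0.
have [s ba _] := path_through_basis a_long b_long a_lt0 b_gt0 bi0 aj0
  (arrow_basis_cross i_long j_long gPhi g_gt0 e).
by split=> //; exists s.
Qed.

End RootSystem.

(* Only differences of levels occur. *)
Theorem proposition1p11 (R : realType) (n l : nat) (Phi : seq 'rV[R]_n)
    (Delta : l.-tuple 'rV[R]_n) (ta alpha beta : 'rV[R]_n) :
  is_reduced_root_system Phi -> is_irreducible Phi -> is_basis Phi Delta ->
  ta \in Phi -> (forall g, g \in Phi -> rle Delta g ta) ->
  long Phi alpha -> long Phi beta -> rle Delta alpha beta ->
  let J := fun i : 'I_l => coef Delta i beta != 0 in
  let K := fun i : 'I_l => coef Delta i alpha != 0 in
  [/\ (rlt Delta 0 alpha -> has_simple_path Phi Delta ta beta alpha),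
      (rlt Delta alpha 0 -> rlt Delta 0 beta ->
        (has_simple_path Phi Delta ta beta alpha <->
           exists i : 'I_l, [/\ long Phi (tnth Delta i), J i & K i]) /\
        (has_path Phi Delta ta beta alpha <->
           exists i j : 'I_l, [/\ long Phi (tnth Delta i), J i,
                                  long Phi (tnth Delta j), K j &
                                  dotv (tnth Delta i) (tnth Delta j) != 0])) &
      (rlt Delta beta 0 -> has_simple_path Phi Delta ta beta alpha)].
Proof.
move=> PhiR PhiI DeltaB _ _ a_long b_long ab J K; split.
- by move=> a_gt0; apply: simple_path_exists => //; left.
- move=> a_lt0 b_gt0; split.
    exact: has_simple_path_cross.
  exact: has_path_cross.
- by move=> b_lt0; apply: simple_path_exists => //; right.
Qed.
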